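(* Let $a,b\ge 0$ and $n=a+b$. There is a bijection $g:\mathcal Y_{a,b}\to\mathcal Y_{a,b}$ such that for every $P\in\mathcal Y_{a,b}$, $$\mathrm{Peak}(P)=\mathrm{hd}(g(P))\qquad\text{and}\qquad \mathrm{Peak}^*(P)=\mathrm{hd}^*(g(P)).$$
   Context: $\mathcal Y_{a,b}$ is the set of lattice paths with unit steps $N$ and $E$ from $(0,0)$ to $(b,a)$ (so $a$ steps $N$ and $b$ steps $E$); each such path is identified with the Young diagram $\lambda$ fitting in the $a\times b$ rectangle (placed against its upper and left sides) whose southeast boundary is the path. Label the vertices of $P$ by $0,1,\dots,n$ starting from the origin. A peak is an occurrence of consecutive steps $NE$; $\mathrm{Peak}(P)$ is the set of labels of the vertices lying between the $N$ and the $E$ of a peak. $\mathrm{Peak}^*(P)=\mathrm{Peak}(PE)$, where $PE$ is $P$ followed by an extra $E$ step; thus $\mathrm{Peak}^*(P)=\mathrm{Peak}(P)\cup\{n\}$ if $P$ ends with $N$ and $\mathrm{Peak}(P)$ otherwise. The hook decomposition $\mathrm{hd}(P)$ of the diagram $\lambda$ with rows $\lambda_1\ge\lambda_2\ge\cdots$, conjugate $\lambda'$, and Durfee square of side $d$ (largest $d$ with $\lambda_d\ge d$) is the set $\{\lambda_i+\lambda'_i-2i+1: 1\le i\le d\}$, i.e. the sizes of the hooks obtained by successively peeling off the largest hook (first row and first column). $\mathrm{hd}^*(P)=\mathrm{hd}(P)\cup\{n\}$ if $P$ begins with an $N$ step, and $\mathrm{hd}^*(P)=\mathrm{hd}(P)$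 otherwise. *)

From mathcomp Require Import all_boot.
Set Implicit Arguments. Unset Strict Implicit. Unset Printing Implicit Defensive.

(* A lattice path is a sequence of steps; [true] = N step, [false] = E step.
   Step number j (0-indexed) goes from vertex j to vertex j+1. *)

Definition Ypath (a b : nat) :=
  {p : seq bool | (count id p == a) && (count negb p == b)}.

Definition Peak (p : seq bool) : seq nat :=
  [seq j.+1 | j <- iota 0 (size p) &
     (nth false p j == true) && (nth true p j.+1 == false)].

Definition Peak_star (p : seq bool) : seq nat := Peak (rcons p false).

Fixpoint ecounts (e : nat) (p : seq bool) : seq nat :=
  match p with
  | [::] => [::]
  | true :: q => e :: ecounts e q
  | false :: q => ecounts e.+1 q
  end.

(* The Young diagram (rows lambda_1 >= lambda_2 >= ... , from the top) in the
   a x b rectangle, against its upper and left sides, whose southeast boundary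
   is the path: row i (from the top) has length = number of E steps before the
   (a-i+1)-th N step. Zero rows are kept (harmless). *)
Definition shape (p : seq bool) : seq nat := rev (ecounts 0 p).

(* lambda_i, 1-indexed *)
Definition part (lam : seq nat) (i : nat) : nat := nth 0 lam i.-1.

Definition conjpart (lam : seq nat) (j : nat) : nat := count (fun x => j <= x) lam.

Definition durfee (lam : seq nat) : nat :=
  \max_(0 <= d < (size lam).+1 | d <= part lam d) d.

Definition hd (p : seq bool) : seq nat :=
  let lam := shape p in
  [seq (part lam i + conjpart lam i).+1 - i.*2 | i <- iota 1 (durfee lam)].

Definition hd_star (p : seq bool) : seq nat :=
  if head false p then rcons (hd p) (size p) else hd p.

(* A peak of a path in Y_{a,b} is a lattice point (x, y), with x E steps and
   y >= 1 N steps before it, and its label is x + y.  The peaks of a path form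
   a chain (x_1, y_1) < ... < (x_k, y_k) in [0, b) x [1, a], increasing in both
   coordinates, and together with (a, b) they determine the path.  Such a chain
   is also the data of k nested hooks in the a x b rectangle, the i-th one from
   the inside having arm x_i and leg y_i - 1, hence size x_i + y_i.  Sending a
   path to the boundary of this diagram is therefore injective, hence bijective,
   and Peak(P) = hd(g P): peeling off the outer hook of the diagram removes the
   outermost point of the chain.  Finally P ends with N iff no peak has height
   a, iff g P begins with N, which accounts for Peak* and hd*. *)

From mathcomp Require zify.
From Pilot Require Import Defs.
From mathcomp Require Import all_boot.
From Stdlib Require Import Lia.
From HB Require Import structures.
Set Implicit Arguments. Unset Strict Implicit. Unset Printing Implicit Defensive.

Definition hooks (lam : seq nat) : seq nat :=
  [seq (part lam i + conjpart lam i).+1 - i.*2 | i <- iota 1 (durfee lam)].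

Lemma hd_hooks p : hd p = hooks (Defs.shape p). Proof. by []. Qed.

Lemma durfee_bounds lam : durfee lam <= part lam (durfee lam) /\ durfee lam <= size lam.
Proof.
rewrite /durfee; apply/andP; rewrite big_seq_cond.
elim/big_ind: _ => //.
  by move=> x y x_ok y_ok; case: (leqP x y) => _; rewrite ?x_ok ?y_ok.
by move=> i /andP[]; rewrite mem_index_iota ltnS => /andP[_ ->] ->.
Qed.

Lemma durfee_max lam d : d <= size lam -> d <= part lam d -> d <= durfee lam.
Proof.
move=> d_size d_part; rewrite /durfee.
by apply: (@leq_bigmax_seq _ _ (fun d => d <= part lam d) id) => //;
  rewrite mem_index_iota ltnS.
Qed.

Lemma durfee_le lam m :
  (forall d, d <= size lam -> d <= part lam d -> d <= m) -> durfee lam <= m.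
Proof.
move=> ub; apply/bigmax_leqP_seq => d.
by rewrite mem_index_iota ltnS => /andP[_]; apply: ub.
Qed.

Lemma nth_cat_nseq0 (L : seq nat) p j :
  nth 0 (L ++ nseq p 0) j = if j < size L then nth 0 L j else 0.
Proof. by rewrite nth_cat nth_nseq; case: ifP => //; rewrite if_same. Qed.

(* [lam] is [mu] with an outer hook of arm [c] and leg [size L] added; the [p]
   empty rows come from the leading N steps of a path, which [shape] keeps. *)
Section OuterHook.
Variables (c p : nat) (L : seq nat).
Hypothesis L_le_c : all (fun x => x <= c) L.
Local Notation mu := (L ++ nseq p 0).
Local Notation lam := (c.+1 :: map S L ++ nseq p 0).

Lemma part_outer_hook i :
  0 < i -> part lam i.+1 = if i.-1 < size L then (part mu i).+1 else 0.
Proof.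
case: i => // i _; rewrite /part /= !nth_cat_nseq0 size_map.
by case: ifP => // i_lt; rewrite (nth_map 0).
Qed.

Lemma durfee_inner_hook_range :
  0 < durfee mu -> (durfee mu).-1 < size L /\ durfee mu <= c.
Proof.
move=> d_gt0; have [d_part _] := durfee_bounds mu.
move: d_part; rewrite /part nth_cat_nseq0; case: ifP => [d_size d_le|]; last lia.
by split=> //; apply: leq_trans d_le (allP L_le_c _ (mem_nth 0 d_size)).
Qed.

Lemma durfee_outer_hook : durfee lam = (durfee mu).+1.
Proof.
have [d_part d_size] := durfee_bounds mu.
have size_lam : size lam = (size mu).+1 by rewrite /= !size_cat size_map.
apply/eqP; rewrite eqn_leq; apply/andP; split.
  apply: durfee_le => -[|[|d]] // d_lam; rewrite part_outer_hook //=.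
  case: ifP => _ // d_le; rewrite ltnS; apply: durfee_max => //; lia.
apply: durfee_max; first lia.
case d_eq: (durfee mu) => [|d]; first by [].
have [d_L d_c] := durfee_inner_hook_range ltac:(lia).
rewrite d_eq /= in d_L; by rewrite part_outer_hook // d_L ltnS -d_eq.
Qed.

Lemma hooks_outer_hook : hooks lam = (c + size L).+1 :: hooks mu.
Proof.
rewrite /hooks durfee_outer_hook /= (iotaDl 1 1) -map_comp.
congr (_ :: _).
  rewrite /part /conjpart /= count_cat count_map count_nseq /=.
  by rewrite (@eq_count _ _ predT) // count_predT; lia.
apply/eq_in_map => i; rewrite mem_iota => /andP[i_gt0 i_le] /=.
have [d_L d_c] := durfee_inner_hook_range ltac:(lia).
rewrite add1n part_outer_hook // ifT; last lia.
have -> : conjpart (map S L ++ nseq p 0) i.+1 = conjpart mu i.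
  by rewrite /conjpart !count_cat count_map !count_nseq /= leqn0 (gtn_eqF i_gt0).
have -> : i < c.+1 by lia.
lia.
Qed.
End OuterHook.

Lemma ecounts_cat e s1 s2 :
  ecounts e (s1 ++ s2) = ecounts e s1 ++ ecounts (e + count negb s1) s2.
Proof.
elim: s1 e => [|[] s1 IH] e /=; first by rewrite addn0.
  by rewrite IH.
by rewrite IH addSnnS.
Qed.

Lemma ecounts_nseq_false e q : ecounts e (nseq q false) = [::].
Proof. by elim: q e => //= q IH e; rewrite IH. Qed.

Lemma ecounts_nseq_true e p : ecounts e (nseq p true) = nseq p e.
Proof. by elim: p => //= p ->. Qed.

Lemma ecounts_shift e s : ecounts e s = map (addn e) (ecounts 0 s).
Proof.
rewrite -[e in LHS]addn0; elim: s 0 => [|[] s IH] e' //=; first by rewrite IH.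
by rewrite -addnS IH.
Qed.

Lemma ecounts_bounded e s : all (fun x => x <= e + count negb s) (ecounts e s).
Proof.
elim: s e => [|[] s IH] e //=; first by rewrite leq_addr IH.
by rewrite -addSnnS.
Qed.

Lemma size_ecounts e s : size (ecounts e s) = count id s.
Proof. by elim: s e => [|[] s IH] e //=; rewrite IH. Qed.

Lemma shape_pad p q R :
  Defs.shape (nseq p true ++ R ++ nseq q false) = Defs.shape R ++ nseq p 0.
Proof.
rewrite /Defs.shape !ecounts_cat ecounts_nseq_true ecounts_nseq_false cats0.
by rewrite rev_cat rev_nseq count_nseq mul0n.
Qed.

Lemma shape_outer_hook p q R :
  Defs.shape (nseq p true ++ false :: R ++ true :: nseq q false) =
  (count negb R).+1 :: map S (Defs.shape R) ++ nseq p 0.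
Proof.
rewrite /Defs.shape ecounts_cat ecounts_nseq_true count_nseq /= ecounts_cat /=.
rewrite ecounts_nseq_false !rev_cat rev_nseq /= (ecounts_shift 1) map_rev.
by rewrite add1n (eq_map add1n).
Qed.

(* Removing the first E step and the last N step of the path erases the outer
   hook of its diagram. *)
Lemma hd_outer_hook p q R :
  hd (nseq p true ++ false :: R ++ true :: nseq q false) =
  (size R).+1 :: hd (nseq p true ++ R ++ nseq q false).
Proof.
rewrite !hd_hooks shape_outer_hook shape_pad hooks_outer_hook.
  by rewrite size_rev size_ecounts addnC (count_predC id).
by rewrite all_rev; apply: ecounts_bounded.
Qed.

Lemma hd_rectangle a b : hd (nseq a true ++ nseq b false) = [::].
Proof.
rewrite hd_hooks -[nseq a true]cats0 -catA shape_pad /hooks.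
suff -> : durfee (Defs.shape [::] ++ nseq a 0) = 0 by [].
apply/eqP; rewrite -leqn0; apply: durfee_le => -[|d] //= _.
by rewrite /part /= nth_nseq; case: ifP.
Qed.

(* The boundary of the nested-hook diagram of a chain [cs] of peaks. *)
Definition hook_path a b (cs : seq (nat * nat)) : seq bool :=
  [seq k \notin unzip2 cs | k <- rev (iota 1 a)] ++ [seq k \in unzip1 cs | k <- iota 0 b].

Definition corner_chain a b (cs : seq (nat * nat)) :=
  [&& pairwise ltn (unzip1 cs), pairwise ltn (unzip2 cs),
      all (fun c => c.1 < b) cs & all (fun c => 0 < c.2 <= a) cs].

Lemma map_in_const (T : eqType) U (f : T -> U) c s :
  {in s, forall k, f k = c} -> map f s = nseq (size s) c.
Proof. by move=> /(@eq_in_map _ _ _ (fun=> c)) ->; elim: s => //= _ s ->. Qed.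

Lemma notin_all_ltn (s : seq nat) y k : all (fun u => u < y) s -> y <= k -> k \notin s.
Proof. by move=> /allP s_lt y_le; apply/negP => /s_lt; lia. Qed.

Lemma iota_split_at m n k :
  k < n -> iota m n = iota m k ++ m + k :: iota (m + k).+1 (n - k.+1).
Proof. by move=> k_lt; rewrite -{1}(subnKC (ltnW k_lt)) iotaD -(subnSK k_lt). Qed.

Section OuterCorner.
Variables (a b x y : nat) (cs : seq (nat * nat)).
Hypotheses (cs_x : all (fun c => c.1 < x) cs) (cs_y : all (fun c => c.2 < y) cs).
Hypotheses (x_lt_b : x < b) (y_gt0 : 0 < y) (y_le_a : y <= a).

Let xs_x : all (fun k => k < x) (unzip1 cs). Proof. by rewrite all_map. Qed.
Let ys_y : all (fun k => k < y) (unzip2 cs). Proof. by rewrite all_map. Qed.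

Lemma hook_path_rcons :
  hook_path a b (rcons cs (x, y)) =
  nseq (a - y) true ++ false :: hook_path y.-1 x cs ++ true :: nseq (b - x.+1) false.
Proof.
rewrite /hook_path /unzip1 /unzip2 !map_rcons.
rewrite (iota_split_at 1 (_ : y.-1 < a)) ?(iota_split_at 0 x_lt_b); last lia.
rewrite add1n (prednK y_gt0) add0n rev_cat rev_cons !map_cat map_rcons cat_rcons -!catA /=.
congr (_ ++ _ :: _ ++ _ ++ _ :: _).
- rewrite (@map_in_const _ _ _ true) ?size_rev ?size_iota // => k.
  rewrite mem_rev mem_iota mem_rcons in_cons negb_or => k_range.
  by rewrite (notin_all_ltn ys_y) ?andbT; lia.
- by rewrite mem_rcons mem_head.
- apply/eq_in_map => k; rewrite mem_rev mem_iota mem_rcons in_cons => k_range.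
  by rewrite ltn_eqF //; lia.
- apply/eq_in_map => k; rewrite mem_iota mem_rcons in_cons => k_range.
  by rewrite ltn_eqF //; lia.
- by rewrite mem_rcons mem_head.
- rewrite (@map_in_const _ _ _ false) ?size_iota // => k.
  rewrite mem_iota mem_rcons in_cons => k_range.
  by rewrite (negbTE (notin_all_ltn xs_x _)) ?orbF; lia.
Qed.

Lemma hook_path_pred :
  hook_path a.-1 b.-1 cs = nseq (a - y) true ++ hook_path y.-1 x cs ++ nseq (b - x.+1) false.
Proof.
rewrite /hook_path (_ : a.-1 = y.-1 + (a - y)); last lia.
rewrite (_ : b.-1 = x + (b - x.+1)); last lia.
rewrite !iotaD rev_cat !map_cat -!catA add1n (prednK y_gt0) add0n.
congr (_ ++ _ ++ _ ++ _).
- rewrite (@map_in_const _ _ _ true) ?size_rev ?size_iota // => k.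
  by rewrite mem_rev mem_iota => k_range; rewrite (notin_all_ltn ys_y); lia.
- rewrite (@map_in_const _ _ _ false) ?size_iota // => k.
  by rewrite mem_iota => k_range; rewrite (negbTE (notin_all_ltn xs_x _)); lia.
Qed.
End OuterCorner.

Lemma corner_chain_rcons a b cs x y :
  corner_chain a b (rcons cs (x, y)) ->
  [/\ all (fun c => c.1 < x) cs, all (fun c => c.2 < y) cs, x < b, 0 < y <= a &
      corner_chain a.-1 b.-1 cs].
Proof.
rewrite /corner_chain /unzip1 /unzip2 !map_rcons !pairwise_rcons !all_rcons !all_map /=.
move=> /and4P[/andP[xs_x xs] /andP[ys_y ys] /andP[x_lt cs_b] /andP[y_range cs_a]].
split=> //; rewrite xs ys /=; apply/andP; split; apply/allP => c c_cs.
  by have /= := allP xs_x c c_cs; lia.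
by have /= := allP ys_y c c_cs; have := allP cs_a c c_cs; lia.
Qed.

Lemma size_hook_path a b cs : size (hook_path a b cs) = a + b.
Proof. by rewrite size_cat !size_map size_rev !size_iota. Qed.

Lemma hook_path_nil a b : hook_path a b [::] = nseq a true ++ nseq b false.
Proof.
rewrite /hook_path (@map_in_const _ _ _ true) ?(@map_in_const _ _ _ false) //.
by rewrite size_rev !size_iota.
Qed.

Lemma count_hook_path a b cs : corner_chain a b cs -> count id (hook_path a b cs) = a.
Proof.
elim/last_ind: cs a b => [|cs [x y] IH] a b.
  by rewrite hook_path_nil count_cat !count_nseq /=; lia.
case/corner_chain_rcons=> cs_x cs_y x_lt y_range /IH.
have [y_gt0 y_le] : 0 < y /\ y <= a by lia.
rewrite hook_path_rcons // (hook_path_pred cs_x cs_y) //.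
by rewrite !count_cat /= !count_cat /= !count_nseq /=; lia.
Qed.

Lemma hd_hook_path a b cs :
  corner_chain a b cs -> hd (hook_path a b cs) = rev [seq c.1 + c.2 | c <- cs].
Proof.
elim/last_ind: cs a b => [|cs [x y] IH] a b.
  by rewrite hook_path_nil hd_rectangle.
case/corner_chain_rcons=> cs_x cs_y x_lt y_range /IH.
have [y_gt0 y_le] : 0 < y /\ y <= a by lia.
rewrite hook_path_rcons // hd_outer_hook -(hook_path_pred cs_x cs_y) // => ->.
rewrite size_hook_path map_rcons rev_rcons; congr (_ :: _) => /=; lia.
Qed.

Lemma pairwise_ltn_eq (s1 s2 : seq nat) :
  pairwise ltn s1 -> pairwise ltn s2 -> s1 =i s2 -> s1 = s2.
Proof. by rewrite -!(sorted_pairwise ltn_trans); apply: (irr_sorted_eq ltn_trans ltnn). Qed.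

Lemma hook_path_inj a b cs cs' :
  corner_chain a b cs -> corner_chain a b cs' -> hook_path a b cs = hook_path a b cs' ->
  cs = cs'.
Proof.
move=> /and4P[xs ys cs_b cs_a] /and4P[xs' ys' cs'_b cs'_a] /eqP.
rewrite eqseq_cat ?size_map // => /andP[/eqP/eq_in_map E2 /eqP/eq_in_map E1].
rewrite -[cs]zip_unzip -[cs']zip_unzip; congr zip; apply: pairwise_ltn_eq => // v.
  have [v_lt|v_ge] := ltnP v b; first by apply: E1; rewrite mem_iota.
  have notin (s : seq (nat * nat)) : all (fun c => c.1 < b) s -> v \in unzip1 s = false.
    by move=> s_b; apply/negbTE/(notin_all_ltn _ v_ge); rewrite all_map.
  by rewrite !notin.
have [v_range|v_out] := boolP (0 < v <= a).
  by apply/negb_inj/E2; rewrite mem_rev mem_iota add1n ltnS.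
have notin (s : seq (nat * nat)) : all (fun c => 0 < c.2 <= a) s -> v \in unzip2 s = false.
  by move=> /allP s_a; apply/negbTE/mapP => -[c /s_a c_a v_eq]; rewrite v_eq c_a in v_out.
by rewrite !notin.
Qed.

Lemma Peak_cons x p :
  Peak (x :: p) = (if x && (nth true p 0 == false) then [:: 1] else [::]) ++ map S (Peak p).
Proof.
rewrite /Peak /= (iotaDl 1 0) filter_map.
by case: x; case: (nth true p 0 == false); rewrite /= -?map_comp.
Qed.

Lemma Peak_rcons p :
  Peak (rcons p false) = Peak p ++ (if last false p then [:: size p] else [::]).
Proof.
elim: p => [|x p IH] //; rewrite rcons_cons !Peak_cons IH map_cat catA.
by case: p IH => [|y p] IH /=; [case: x | case: (last y p)].
Qed.

Arguments Peak : simpl never.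

(* The peaks of [s] when [e] E steps and [m] N steps have already been read,
   the last of them being an N step iff [afterN]. *)
Fixpoint corners_from (afterN : bool) (e m : nat) (s : seq bool) : seq (nat * nat) :=
  match s with
  | [::] => [::]
  | true :: s' => corners_from true e m.+1 s'
  | false :: s' =>
      if afterN then (e, m) :: corners_from false e.+1 m s' else corners_from false e.+1 m s'
  end.

Definition corners (s : seq bool) : seq (nat * nat) := corners_from false 0 0 s.

Lemma corners_from_sum afterN e m s :
  [seq c.1 + c.2 | c <- corners_from afterN e m s] =
  map (addn (e + m))
      ((if afterN && (nth true s 0 == false) then [:: 0] else [::]) ++ Peak s).
Proof.
elim: s afterN e m => [|[] s IH] afterN e m; first by case: afterN.
  rewrite /= IH Peak_cons andbF /= !map_cat -map_comp.
  by case: (nth true s 0 == false) => /=; [congr (_ :: _); first lia|];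
     apply: eq_map => v /=; lia.
rewrite /= Peak_cons /= !map_cat -map_comp.
by case: afterN => /=; rewrite IH /= ?map_cat; [congr (_ :: _); first lia|];
   apply: eq_map => v /=; lia.
Qed.

Lemma Peak_corners s : Peak s = [seq c.1 + c.2 | c <- corners s].
Proof. by rewrite corners_from_sum map_id_in. Qed.

Lemma corners_from_bounds afterN e m s :
  let cs := corners_from afterN e m s in
  [/\ pairwise ltn (unzip1 cs), pairwise ltn (unzip2 cs),
      all (fun c => e <= c.1 < e + count negb s) cs &
      all (fun c => m + ~~ afterN <= c.2 <= m + count id s) cs].
Proof.
elim: s afterN e m => [|[] s IH] afterN e m /=; first by split.
  have [xs ys cs_e cs_m] := IH true e m.+1; split=> //.
  by apply/allP => c /(allP cs_m); case: afterN => /=; lia.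
have [xs ys cs_e cs_m] := IH false e.+1 m.
have cs_e' : all (fun c => e <= c.1 < e + (count negb s).+1) (corners_from false e.+1 m s).
  by apply/allP => c /(allP cs_e); lia.
have cs_m' : all (fun c => m + ~~ afterN <= c.2 <= m + count id s) (corners_from false e.+1 m s).
  by apply/allP => c /(allP cs_m); case: afterN => /=; lia.
case: afterN cs_m' => cs_m' /=; last by split.
split; rewrite ?xs ?ys ?cs_e' ?cs_m' ?andbT ?all_map /=.
- by apply/allP => c /(allP cs_e) /=; lia.
- by apply/allP => c /(allP cs_m) /=; lia.
- lia.
- lia.
Qed.

Lemma corner_chain_corners s : corner_chain (count id s) (count negb s) (corners s).
Proof. by have [xs ys cs_e cs_m] := corners_from_bounds false 0 0 s; apply/and4P. Qed.

Lemma last_noN s : ~~ has id s -> last false s = false.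
Proof. by elim: s => //= -[] s IH //= /IH. Qed.

Lemma top_in_corners_from afterN e m s :
  (m + count id s \in unzip2 (corners_from afterN e m s)) =
  (afterN || has id s) && ~~ last true s.
Proof.
elim: s afterN e m => [|[] s IH] afterN e m; first by rewrite andbF.
  by rewrite /= addnA addn1 IH orbT; case: s {IH}.
rewrite /= add0n; case: afterN => /=; last by rewrite IH; case: s {IH}.
rewrite in_cons IH /= -{2}[m]addn0 eqn_add2l.
case: (boolP (has id s)) => [has_N|no_N] /=.
  by rewrite eqn0Ngt -has_count has_N /=; case: s has_N {IH}.
by rewrite eqn0Ngt -has_count (negbTE no_N) /=; case: s no_N {IH} => // x s /last_noN ->.
Qed.

Lemma head_hook_path_corners s :
  head false (hook_path (count id s) (count negb s) (corners s)) = last false s.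
Proof.
have [_ _ _ cs_N] := corners_from_bounds false 0 0 s.
have [has_N|no_N] := boolP (has id s); last first.
  have N0 : count id s = 0 by apply/eqP; rewrite eqn0Ngt -has_count.
  have -> : corners s = [::].
    by move: cs_N; rewrite -/(corners s) N0; case: (corners s) => // c cs /andP[]; lia.
  by rewrite hook_path_nil N0 last_noN //; case: (count negb s).
have N_gt0 : 0 < count id s by rewrite -has_count.
have := top_in_corners_from false 0 0 s; rewrite add0n has_N /= => top.
rewrite /hook_path -{1}(prednK N_gt0) (iota_split_at 1 (ltnSn _)) subnn rev_cat /=.
by rewrite add1n prednK // top negbK; case: s has_N {top cs_N N_gt0}.
Qed.

Lemma corners_from_afterN_head e m s :
  0 < count negb s -> exists2 m', m <= m' & exists cs, corners_from true e m s = (e, m') :: cs.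
Proof.
elim: s m => [|[] s IH] m //= s_E; last by exists m => //; eexists.
by have [m' m_le cs_eq] := IH m.+1 s_E; exists m' => //; apply: ltnW.
Qed.

Lemma corners_from_EN_neq afterN e m s1 s2 :
  0 < count negb s2 -> corners_from afterN e m (false :: s1) != corners_from afterN e m (true :: s2).
Proof.
move=> s2_E /=; have [m' m_lt [cs ->]] := corners_from_afterN_head e m.+1 s2_E.
case: afterN; apply/eqP; first by case; lia.
have [_ _ cs1_e _] := corners_from_bounds false e.+1 m s1.
by move=> cs1_eq; have /= := allP cs1_e (e, m'); rewrite cs1_eq mem_head => /(_ isT); lia.
Qed.

Lemma corners_from_inj afterN e m s s' :
  count id s = count id s' -> count negb s = count negb s' ->
  corners_from afterN e m s = corners_from afterN e m s' -> s = s'.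
Proof.
elim: s s' afterN e m => [|x s IH] [|y s'] afterN e m //.
- by case: y => /=; lia.
- by case: x => /=; lia.
case: x; case: y => N_eq E_eq cs_eq; move: N_eq E_eq => /= N_eq E_eq.
- by congr (_ :: _); apply: (IH _ true e m.+1); [lia | lia | exact: cs_eq].
- have s_E : 0 < count negb s by lia.
  by move: (corners_from_EN_neq afterN e m s' s_E); rewrite cs_eq eqxx.
- have s'_E : 0 < count negb s' by lia.
  by move: (corners_from_EN_neq afterN e m s s'_E); rewrite cs_eq eqxx.
congr (_ :: _); apply: (IH _ false e.+1 m); [lia | lia |].
by case: afterN cs_eq => /= [[]|].
Qed.

Definition peaks_to_hooks (s : seq bool) : seq bool :=
  hook_path (count id s) (count negb s) (corners s).

Lemma count_peaks_to_hooks s :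
  count id (peaks_to_hooks s) = count id s /\ count negb (peaks_to_hooks s) = count negb s.
Proof.
have N_eq := count_hook_path (corner_chain_corners s).
have := count_predC id (peaks_to_hooks s).
by rewrite size_hook_path N_eq => /addnI.
Qed.

Lemma hd_peaks_to_hooks s : hd (peaks_to_hooks s) = rev (Peak s).
Proof. by rewrite hd_hook_path ?corner_chain_corners // Peak_corners. Qed.

Lemma Peak_star_peaks_to_hooks s : Peak_star s =i hd_star (peaks_to_hooks s).
Proof.
rewrite /Peak_star /hd_star Peak_rcons head_hook_path_corners hd_peaks_to_hooks.
rewrite size_hook_path (count_predC id) => v.
by case: (last false s); rewrite mem_cat ?mem_rcons ?in_cons mem_rev ?in_nil ?orbF // orbC.
Qed.

Lemma peaks_to_hooks_inj s s' :
  count id s = count id s' -> count negb s = count negb s' ->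
  peaks_to_hooks s = peaks_to_hooks s' -> s = s'.
Proof.
move=> N_eq E_eq; rewrite /peaks_to_hooks N_eq E_eq => /hook_path_inj cs_eq.
apply: (corners_from_inj N_eq E_eq); apply: cs_eq; last exact: corner_chain_corners.
by rewrite -N_eq -E_eq; apply: corner_chain_corners.
Qed.

Section YpathBijection.
Variables a b : nat.

Definition finYpath := Ypath a b.
HB.instance Definition _ := Countable.on finYpath.

Lemma size_Ypath (P : finYpath) : size (val P) == a + b.
Proof. by case: P => p /= /andP[/eqP <- /eqP <-]; rewrite (count_predC id). Qed.

Lemma Ypath_tupleK :
  pcancel (fun P => Tuple (size_Ypath P)) (fun t : (a + b).-tuple bool => insub (val t)).
Proof. by move=> P; apply: valK. Qed.

HB.instance Definition _ : isFinite finYpath := PCanIsFinite Ypath_tupleK.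

Lemma Ypath_peaks_to_hooks (P : Ypath a b) :
  (count id (peaks_to_hooks (val P)) == a) && (count negb (peaks_to_hooks (val P)) == b).
Proof. by case: P => p p_ab; have [-> ->] := count_peaks_to_hooks p. Qed.

Definition Ypeaks_to_hooks (P : finYpath) : finYpath :=
  exist _ (peaks_to_hooks (val P)) (Ypath_peaks_to_hooks P).

Lemma Ypeaks_to_hooks_bij : bijective Ypeaks_to_hooks.
Proof.
apply: injF_bij => -[p p_ab] [q q_ab] /(congr1 val) /= pq_eq; apply: val_inj => /=.
case/andP: p_ab q_ab => /eqP p_N /eqP p_E /andP[/eqP q_N /eqP q_E].
by apply: peaks_to_hooks_inj pq_eq; rewrite ?p_N ?q_N ?p_E ?q_E.
Qed.
End YpathBijection.

Theorem mainTheorem10 (a b : nat) :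
  exists g : Ypath a b -> Ypath a b,
    bijective g /\
    forall P : Ypath a b,
      Peak (val P) =i hd (val (g P)) /\
      Peak_star (val P) =i hd_star (val (g P)).
Proof.
exists (@Ypeaks_to_hooks a b); split; first exact: Ypeaks_to_hooks_bij.
move=> P; split; last exact: Peak_star_peaks_to_hooks.
by move=> v; rewrite /= hd_peaks_to_hooks mem_rev.
Qed.
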